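(* Let the type be $\mathrm B_n$, $n\ge2$. For $j\in I$ and $k\in\mathbb Z_{\ge0}$: \[ \tilde c_{ji}(-2k-1)=0\ \text{ for } i\in I\setminus\{n\},\qquad \tilde c_{jn}(-2k-2)=0. \] For $j\in I$ and $k=0,1,\dots,n-1$: \[ \tilde c_{ji}(-2k)=\begin{cases}1&\text{if }(\ast)\\0&\text{otherwise}\end{cases}\ (i\in I\setminus\{n\}),\qquad \tilde c_{jn}(-2k-1)=\begin{cases}1&\text{if }k+j-n\in2\mathbb Z_{\ge0}\\0&\text{otherwise.}\end{cases} \] Here $(\ast)$ is the condition that either - [$i+1\le k+j\le 2n-i-1$ and $1-i\le k-j\le i-1$, with $(k+j)-(i+1)\in2\mathbb Z_{\ge0}$ and $(k-j)-(1-i)\in2\mathbb Z_{\ge0}$], or - [$2n-i\le k+j$]. Moreover, for $j\in I$ and $k=0,1,\dots,n-1$: \[ \tilde c_{ji}(-2k)=\tilde c_{ji}(-4n+2+2k)\ (i\in I\setminus\{n\}),\qquad \tilde c_{jn}(-2k-1)=\tilde c_{jn}(-4n+3+2k). \]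
   Context: Let $\mathfrak g$ be of type $\mathrm B_n$ ($n\ge2$), with $I=\{1,\dots,n\}$ and $\alpha_n$ short. The Cartan matrix $c_{ij}=\langle h_i,\alpha_j\rangle$ has: - $c_{ii}=2$; - $c_{i,i+1}=c_{i+1,i}=-1$ for $1\le i\le n-2$; - $c_{n-1,n}=-1$ and $c_{n,n-1}=-2$; - all other entries $0$. Put $r_i=2$ for $i\le n-1$ and $r_n=1$. Define the quantum Cartan matrix $C(z)$ over $\mathbb Z[z^{\pm1}]$ by $C(z)_{ii}=z^{r_i}+z^{-r_i}$ and $C(z)_{ij}=[c_{ij}]_z=(z^{c_{ij}}-z^{-c_{ij}})/(z-z^{-1})$ for $i\neq j$. Let $\widetilde C(z)=C(z)^{-1}$, with entries regarded as elements of $\mathbb Z((z^{-1}))$, and write $\widetilde C(z)_{ji}=\sum_{r\in\mathbb Z}\tilde c_{ji}(r)z^r$. *)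

From mathcomp Require Import all_boot all_order all_algebra.
Set Implicit Arguments. Unset Strict Implicit. Unset Printing Implicit Defensive.
Import Order.TTheory GRing.Theory Num.Theory.
Local Open Scope ring_scope.

(* Cartan matrix of type B_n, alpha_n short: c_ij = <h_i, alpha_j>. *)
Definition cartanB (n i j : nat) : int :=
  if i == j then 2
  else if ((i.+1 == j) && (j <= n.-1)%N) || ((j.+1 == i) && (i <= n.-1)%N) then -1
  else if (i == n.-1) && (j == n) then -1
  else if (i == n) && (j == n.-1) then -2
  else 0.

Definition rB (n i : nat) : nat := if i == n then 1%N else 2%N.

(* Coefficient of z^s in the quantum integer [m]_z = (z^m - z^-m)/(z - z^-1). *)
Definition qint_coef (m s : int) : int :=
  let a := `|m|%N in
  let c : int := if (a == 0)%N then 0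
    else (((`|s|%N <= a.-1)%N && ((2 %| (s + a%:Z - 1))%Z)) : int) in
  if 0 <= m then c else - c.

(* Coefficient of z^s in the entry C(z)_{ij} of the quantum Cartan matrix. *)
Definition Ccoef (n i j : nat) (s : int) : int :=
  if i == j then ((s == (rB n i)%:Z) : int) + ((s == - (rB n i)%:Z) : int)
  else qint_coef (cartanB n i j) s.

(* A family X (i,k in I) of formal series sum_r X i k r z^r lies in
   Z((z^{-1})) : its support is bounded above. *)
Definition laurent_zinv (n : nat) (X : nat -> nat -> int -> int) : Prop :=
  exists N : int, forall i k r, (1 <= i <= n)%N -> (1 <= k <= n)%N ->
    N < r -> X i k r = 0.

(* Coefficient of z^r in (C(z) X)_{ik}; all entries of C(z) are supported in
   degrees -2..2. *)
Definition CX_coef (n : nat) (X : nat -> nat -> int -> int) (i k : nat) (r : int) : int :=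
  \sum_(1 <= j < n.+1) \sum_(0 <= t < 5) Ccoef n i j (t%:Z - 2) * X j k (r - (t%:Z - 2)).

Definition is_inv_qcartan (n : nat) (X : nat -> nat -> int -> int) : Prop :=
  laurent_zinv n X /\
  forall i k r, (1 <= i <= n)%N -> (1 <= k <= n)%N ->
    CX_coef n X i k r = (((i == k) && (r == 0)) : int).

Definition in2N (x : int) : bool := (0 <= x) && (2 %| x)%Z.

Definition starB (n i j k : nat) : bool :=
  let i := i%:Z in let j := j%:Z in let k := k%:Z in let n := n%:Z in
  [&& i + 1 <= k + j, k + j <= 2 * n - i - 1, 1 - i <= k - j, k - j <= i - 1,
      in2N ((k + j) - (i + 1)) & in2N ((k - j) - (1 - i))]
  || (2 * n - i <= k + j).

(* C(z) is banded, so C(z) X = 1 determines X column by column by a downward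
   recursion in the degree r once X vanishes in high degrees: the row of a long
   node j < n yields X_j(r - 2) and the row of the short node n yields X_n(r - 1)
   from terms of higher degree.  Hence a solution of the homogeneous equations in
   degrees >= L which vanishes in high degrees vanishes in degrees >= L - 1.
   Applied to the part of X of the wrong parity (odd degrees in the long columns,
   even degrees in the short one), which solves the homogeneous equations in all
   degrees, this gives the vanishing statements.  Applied to X minus an explicit
   candidate, which solves C(z) X = 1 in degrees >= -4n + 3, it identifies X with
   the candidate in degrees >= -4n + 2; the closed formulas and the symmetry
   k <-> 2n - 1 - k (resp. 2n - 2 - k) are built into the candidate, and checking
   that it solves the equations is a finite case analysis in linear arithmetic. *)

From Stdlib Require Import ZArith Lia.
From mathcomp Require Import all_boot all_order all_algebra.
Import Order.TTheory GRing.Theory Num.Theory.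

Local Open Scope Z_scope.

(** * The candidate inverse *)

Definition in2NZ (x : Z) : bool := (0 <=? x) && Z.even x.

(* Condition (star) without its redundant clauses: both parity conditions say that
   k + j - i - 1 is even, and their nonnegativity follows from the inequalities. *)
Definition starZ (n i j k : Z) : bool :=
  ((i + 1 <=? k + j) && (k + j <=? 2 * n - i - 1) && (1 - i <=? k - j) && (k - j <=? i - 1)
    && Z.even (k + j - i - 1)) || (2 * n - i <=? k + j).

(* A long column (c < n) is supported on r = -2k
   with 0 <= k <= 2n - 1 and is symmetric under k <-> 2n - 1 - k; the short column
   on r = -2k - 1 with 0 <= k <= 2n - 2, symmetric under k <-> 2n - 2 - k. *)
Definition ctilde_long (n j i k : Z) : bool :=
  (1 <=? j) && (j <=? n) &&
  (((0 <=? k) && (k <=? n - 1) && starZ n i j k) ||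
   ((n <=? k) && (k <=? 2 * n - 1) && starZ n i j (2 * n - 1 - k))).

Definition ctilde_short (n j k : Z) : bool :=
  (1 <=? j) && (j <=? n) &&
  (((0 <=? k) && (k <=? n - 1) && in2NZ (k + j - n)) ||
   ((n <=? k) && (k <=? 2 * n - 2) && in2NZ (2 * n - 2 - k + j - n))).

Definition ctildeZ (n j c r : Z) : Z :=
  if c <? n then (if Z.even r then Z.b2z (ctilde_long n j c (- (r / 2))) else 0)
  else (if Z.even r then 0 else Z.b2z (ctilde_short n j (- ((r + 1) / 2)))).

Ltac split_ranges :=
  repeat (match goal with |- context [?x <=? ?y] => destruct (Z.leb_spec x y) end;
          cbn [andb orb Z.b2z]; try lia).

Ltac split_atoms :=
  repeat (match goal with
  | |- context [?x <=? ?y] => destruct (Z.leb_spec x y)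
  | |- context [?x =? ?y] => destruct (Z.eqb_spec x y)
  | |- context [Z.even ?x] =>
      let m := fresh "m" in let E := fresh "E" in
      destruct (Z.even x) eqn:E;
        [ apply Z.even_spec in E; destruct E as [m E]
        | rewrite -Z.negb_odd in E; apply negbFE, Z.odd_spec in E; destruct E as [m E] ]
  end; cbn [andb orb Z.b2z]; try lia).

Ltac b2z_lia :=
  repeat (match goal with |- context [?x =? ?y] => destruct (Z.eqb_spec x y) end;
          cbn [andb Z.b2z]; try lia).

Lemma ctilde_long_rec n i j k : 2 <= n -> 1 <= i <= n - 1 -> 1 <= j <= n - 1 ->
  k <= 2 * n - 2 ->
  Z.b2z (ctilde_long n j i (k + 1)) + Z.b2z (ctilde_long n j i (k - 1))
  - Z.b2z (ctilde_long n (j - 1) i k) - Z.b2z (ctilde_long n (j + 1) i k)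
  = Z.b2z ((j =? i) && (k =? 0)).
Proof. by move=> *; rewrite /ctilde_long /starZ; split_atoms. Qed.

Lemma ctilde_long_rec_n n i k : 2 <= n -> 1 <= i <= n - 1 -> k <= 2 * n - 1 ->
  Z.b2z (ctilde_long n n i k) + Z.b2z (ctilde_long n n i (k - 1))
  - Z.b2z (ctilde_long n (n - 1) i k) - Z.b2z (ctilde_long n (n - 1) i (k - 1)) = 0.
Proof. by move=> *; rewrite /ctilde_long /starZ; split_atoms. Qed.

Lemma ctilde_short_rec n j k : 2 <= n -> 1 <= j <= n - 1 -> k <= 2 * n - 2 ->
  Z.b2z (ctilde_short n j (k + 1)) + Z.b2z (ctilde_short n j (k - 1))
  - Z.b2z (ctilde_short n (j - 1) k) - Z.b2z (ctilde_short n (j + 1) k) = 0.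
Proof. by move=> *; rewrite /ctilde_short /in2NZ; split_atoms. Qed.

Lemma ctilde_short_rec_n n k : 2 <= n -> k <= 2 * n - 2 ->
  Z.b2z (ctilde_short n n k) + Z.b2z (ctilde_short n n (k - 1))
  - Z.b2z (ctilde_short n (n - 1) k) - Z.b2z (ctilde_short n (n - 1) (k - 1))
  = Z.b2z (k =? 0).
Proof. by move=> *; rewrite /ctilde_short /in2NZ; split_atoms. Qed.

Lemma ctildeZ_even n j c k :
  ctildeZ n j c (- (2 * k)) = if c <? n then Z.b2z (ctilde_long n j c k) else 0.
Proof.
rewrite /ctildeZ (_ : - (2 * k) = - k * 2); last lia.
by rewrite Z.even_mul orbT Z.div_mul ?Z.opp_involutive.
Qed.

Lemma ctildeZ_odd n j c k :
  ctildeZ n j c (- (2 * k) - 1) = if c <? n then 0 else Z.b2z (ctilde_short n j k).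
Proof.
rewrite /ctildeZ (_ : - (2 * k) - 1 = 1 + 2 * (- k - 1)); last lia.
rewrite Z.even_add_mul_2 /= (_ : 1 + 2 * (- k - 1) + 1 = - k * 2); last lia.
by rewrite Z.div_mul ?Z.opp_involutive.
Qed.

Lemma ctildeZ_long n j i k : 1 <= i <= n - 1 -> 1 <= j <= n -> 0 <= k <= n - 1 ->
  ctildeZ n j i (- (2 * k)) = Z.b2z (starZ n i j k) /\
  ctildeZ n j i (- (2 * (2 * n - 1 - k))) = Z.b2z (starZ n i j k).
Proof.
move=> hi hj hk; rewrite !ctildeZ_even (_ : i <? n = true); last lia.
rewrite /ctilde_long (_ : 2 * n - 1 - (2 * n - 1 - k) = k); last lia.
by split; split_ranges; rewrite orbF.
Qed.

Lemma ctildeZ_short n j k : 1 <= j <= n -> 0 <= k <= n - 1 ->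
  ctildeZ n j n (- (2 * k) - 1) = Z.b2z (in2NZ (k + j - n)) /\
  ctildeZ n j n (- (2 * (2 * n - 2 - k)) - 1) = Z.b2z (in2NZ (k + j - n)).
Proof.
move=> hj hk; rewrite !ctildeZ_odd Z.ltb_irrefl /ctilde_short.
rewrite (_ : 2 * n - 2 - (2 * n - 2 - k) + j - n = k + j - n); last lia.
by split; split_ranges; rewrite ?orbF; congr (Z.b2z (in2NZ _)); lia.
Qed.

Lemma Z_neg_even_or_odd r : exists k, r = - (2 * k) \/ r = - (2 * k) - 1.
Proof.
by case: (Z.Even_or_Odd r) => [[q ->] | [q ->]];
  [exists (- q); left | exists (- q - 1); right]; lia.
Qed.

Lemma ctildeZ_j0 n c r : ctildeZ n 0 c r = 0.
Proof. by rewrite /ctildeZ; case: (c <? n); case: (Z.even r). Qed.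

Lemma ctildeZ_pos n j c r : 0 < r -> ctildeZ n j c r = 0.
Proof.
move=> hr; case: (Z_neg_even_or_odd r) hr => k [-> | ->] hr;
  rewrite ?ctildeZ_even ?ctildeZ_odd /ctilde_long /ctilde_short; case: (c <? n);
  by split_ranges.
Qed.

Lemma ctildeZ_rec n j c r : 2 <= n -> 1 <= c <= n -> 1 <= j <= n - 1 -> - 4 * n + 3 <= r ->
  ctildeZ n j c (r - 2) + ctildeZ n j c (r + 2) - ctildeZ n (j - 1) c r - ctildeZ n (j + 1) c r
  = Z.b2z ((j =? c) && (r =? 0)).
Proof.
move=> hn hc hj hr; case: (Z_neg_even_or_odd r) hr => k [-> | ->] hr.
- rewrite (_ : - (2 * k) - 2 = - (2 * (k + 1))); last lia.
  rewrite (_ : - (2 * k) + 2 = - (2 * (k - 1))); last lia.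
  rewrite !ctildeZ_even; case: (Z.ltb_spec c n) => hcn; last by b2z_lia.
  by move: (ctilde_long_rec n c j k); b2z_lia.
- rewrite (_ : - (2 * k) - 1 - 2 = - (2 * (k + 1)) - 1); last lia.
  rewrite (_ : - (2 * k) - 1 + 2 = - (2 * (k - 1)) - 1); last lia.
  rewrite !ctildeZ_odd; case: (Z.ltb_spec c n) => hcn; first by b2z_lia.
  by move: (ctilde_short_rec n j k); b2z_lia.
Qed.

Lemma ctildeZ_rec_n n c r : 2 <= n -> 1 <= c <= n -> - 4 * n + 3 <= r ->
  ctildeZ n n c (r - 1) + ctildeZ n n c (r + 1)
  - ctildeZ n (n - 1) c (r - 1) - ctildeZ n (n - 1) c (r + 1)
  = Z.b2z ((c =? n) && (r =? 0)).
Proof.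
move=> hn hc; case: (Z_neg_even_or_odd r) => k [-> | ->] hr.
- rewrite (_ : - (2 * k) + 1 = - (2 * (k - 1)) - 1); last lia.
  rewrite !ctildeZ_odd; case: (Z.ltb_spec c n) => hcn; first by b2z_lia.
  by move: (ctilde_short_rec_n n k); b2z_lia.
- rewrite (_ : - (2 * k) - 1 - 1 = - (2 * (k + 1))); last lia.
  rewrite (_ : - (2 * k) - 1 + 1 = - (2 * k)); last lia.
  rewrite !ctildeZ_even; case: (Z.ltb_spec c n) => hcn; last by b2z_lia.
  by move: (ctilde_long_rec_n n c (k + 1)); rewrite (_ : k + 1 - 1 = k); [b2z_lia | lia].
Qed.

Local Close Scope Z_scope.

(* Loaded only now: with the MathComp instances of zify in scope, [lia] is many
   times slower on the case splits above. *)
From mathcomp Require Import ssrZ zify.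

Local Open Scope ring_scope.

(** * Rows of the quantum Cartan matrix *)

Lemma qint_coef0 s : qint_coef 0 s = 0.
Proof. by []. Qed.

Lemma qint_coefN1 s : qint_coef (-1) s = - (s == 0 : int).
Proof. by rewrite /qint_coef /=; lia. Qed.

Lemma qint_coefN2 s : qint_coef (-2) s = - ((s == 1 : int) + (s == -1 : int)).
Proof. by rewrite /qint_coef /=; lia. Qed.

Lemma big_supp_sub (R : nmodType) (I : eqType) (r A : seq I) (F : I -> R) :
  uniq r -> uniq A -> {subset A <= r} -> {in r, forall i, i \notin A -> F i = 0} ->
  \sum_(i <- r) F i = \sum_(i <- A) F i.
Proof.
move=> ur uA sAr F0; rewrite -(big_rmcond_in _ (P := mem A)); last exact: F0.
rewrite -big_filter; apply/perm_big/uniq_perm; rewrite ?filter_uniq // => i.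
by rewrite mem_filter andb_idr //; apply: sAr.
Qed.

Lemma sum_window (C Y : int -> int) (r : int) :
  \sum_(0 <= t < 5) C (t%:Z - 2) * Y (r - (t%:Z - 2)) =
  C (-2) * Y (r + 2) + C (-1) * Y (r + 1) + C 0 * Y r + C 1 * Y (r - 1) + C 2 * Y (r - 2).
Proof.
rewrite !big_nat_recr //= big_geq // add0r; congr (_ + _ + _ + _ + _); congr (_ * Y _); lia.
Qed.

Section QuantumCartanRows.
Variable n : nat.

Lemma cartanB_far j j' : j' != j -> j' != j.+1 -> j'.+1 != j -> cartanB n j j' = 0.
Proof. by rewrite /cartanB; repeat case: ifP; lia. Qed.

Lemma cartanB_succ j : (j < n)%N -> cartanB n j j.+1 = -1.
Proof. by rewrite /cartanB; repeat case: ifP; lia. Qed.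

Lemma cartanB_pred j : (1 < j < n)%N -> cartanB n j j.-1 = -1.
Proof. by rewrite /cartanB; repeat case: ifP; lia. Qed.

Lemma cartanB_short_pred : (1 < n)%N -> cartanB n n n.-1 = -2.
Proof. by rewrite /cartanB; repeat case: ifP; lia. Qed.

Lemma Ccoef_offdiag j j' s : j != j' -> Ccoef n j j' s = qint_coef (cartanB n j j') s.
Proof. by rewrite /Ccoef => /negbTE ->. Qed.

Lemma Ccoef_diag j s :
  Ccoef n j j s = (s == (rB n j)%:Z : int) + (s == - (rB n j)%:Z : int).
Proof. by rewrite /Ccoef eqxx. Qed.

Variable Y : nat -> nat -> int -> int.

Lemma CX_coef_long_row c j r : (1 <= j < n)%N ->
  CX_coef n Y j c r =
  Y j c (r - 2) + Y j c (r + 2) - (if (1 < j)%N then Y j.-1 c r else 0) - Y j.+1 c r.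
Proof.
move=> hj; have Cjj s : Ccoef n j j s = (s == 2 : int) + (s == -2 : int).
  by rewrite Ccoef_diag /rB ifN //; lia.
have Cjs s : Ccoef n j j.+1 s = - (s == 0 : int).
  by rewrite Ccoef_offdiag ?cartanB_succ ?qint_coefN1 //; lia.
rewrite /CX_coef; under eq_bigr do rewrite sum_window.
rewrite (@big_supp_sub _ _ _ (if (1 < j)%N then [:: j.-1; j; j.+1] else [:: j; j.+1])).
- case: ifP => hj1; rewrite !big_cons big_nil !Cjj !Cjs /=; last lia.
  have Cjp s : Ccoef n j j.-1 s = - (s == 0 : int).
    by rewrite Ccoef_offdiag ?cartanB_pred ?qint_coefN1 //; lia.
  rewrite !Cjp /=; lia.
- exact: iota_uniq.
- by case: ifP => /= ?; rewrite !inE; lia.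
- by move=> j'; case: ifP => /= ?; rewrite !inE mem_index_iota; lia.
- move=> j'; rewrite mem_index_iota => hj' hA.
  have {}hA : [&& j' != j, j' != j.+1 & j'.+1 != j].
    by move: hA; case: ifP => ?; rewrite !inE; lia.
  have [hjj' hjs hjp] := and3P hA.
  by rewrite !Ccoef_offdiag 1?eq_sym // cartanB_far // qint_coef0 !mul0r !addr0.
Qed.

Lemma CX_coef_short_row c r : (1 < n)%N ->
  CX_coef n Y n c r = Y n c (r - 1) + Y n c (r + 1) - Y n.-1 c (r - 1) - Y n.-1 c (r + 1).
Proof.
move=> hn; have Cnn s : Ccoef n n n s = (s == 1 : int) + (s == -1 : int).
  by rewrite Ccoef_diag /rB eqxx.
have Cnp s : Ccoef n n n.-1 s = - ((s == 1 : int) + (s == -1 : int)).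
  by rewrite Ccoef_offdiag ?cartanB_short_pred ?qint_coefN2 //; lia.
rewrite /CX_coef; under eq_bigr do rewrite sum_window.
rewrite (@big_supp_sub _ _ _ [:: n.-1; n]).
- rewrite !big_cons big_nil !Cnn !Cnp /=; lia.
- exact: iota_uniq.
- by rewrite /= !inE; lia.
- by move=> j'; rewrite !inE mem_index_iota; lia.
- move=> j'; rewrite mem_index_iota !inE => hj' hA.
  have hjn : j' != n by lia.
  by rewrite !Ccoef_offdiag 1?eq_sym // cartanB_far ?qint_coef0 ?mul0r ?addr0 //; lia.
Qed.
End QuantumCartanRows.

(** * Uniqueness and parity *)

Section Uniqueness.
Variables (n : nat) (Y : nat -> nat -> int -> int) (c : nat) (L N : int).
Hypothesis hn : (1 < n)%N.
Hypothesis homog : forall j (r : int), (1 <= j <= n)%N -> L <= r -> CX_coef n Y j c r = 0.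
Hypothesis top : forall j (r : int), (1 <= j <= n)%N -> N < r -> Y j c r = 0.

Lemma CX_coef_homog_eq0 j r : (1 <= j <= n)%N -> L - 1 <= r -> Y j c r = 0.
Proof.
suff H t : forall r : int, N - t%:Z < r -> L - 1 <= r ->
    forall j, (1 <= j <= n)%N -> Y j c r = 0.
  by move=> hj hr; apply: (H `|N - r|.+1) => //; lia.
elim: t => [|t IH] {}r hr hLr; first by move=> i hi; apply: top; lia.
have above i (r' : int) : (1 <= i <= n)%N -> r < r' -> Y i c r' = 0.
  by move=> hi hr'; apply: IH => //; lia.
have long_rows i : (1 <= i < n)%N -> Y i c r = 0.
  move=> hi; have := homog i (r + 2) ltac:(lia) ltac:(lia).
  have h4 : Y i c (r + 2 + 2) = 0 by apply: above; lia.
  have hs : Y i.+1 c (r + 2) = 0 by apply: above; lia.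
  have hp : (if (1 < i)%N then Y i.-1 c (r + 2) else 0) = 0.
    by case: ifP => // ?; apply: above; lia.
  by rewrite CX_coef_long_row // (_ : r + 2 - 2 = r) ?h4 ?hs ?hp; lia.
move=> i hi; case: (ltnP i n) => hin; first by apply: long_rows; lia.
have -> : i = n by lia.
have := homog n (r + 1) ltac:(lia) ltac:(lia).
have h2 : Y n c (r + 1 + 1) = 0 by apply: above; lia.
have hp0 : Y n.-1 c r = 0 by apply: long_rows; lia.
have hp2 : Y n.-1 c (r + 1 + 1) = 0 by apply: above; lia.
by rewrite CX_coef_short_row // (_ : r + 1 - 1 = r) ?h2 ?hp0 ?hp2; lia.
Qed.
End Uniqueness.

Lemma dvdz2_shift (r : int) :
  [/\ (2 %| (r - 2))%Z = (2 %| r)%Z, (2 %| (r + 2))%Z = (2 %| r)%Z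
    & (2 %| (r + 1))%Z = (2 %| (r - 1))%Z].
Proof. split; apply/idP/idP; lia. Qed.

Section Parity.
Variables (n : nat) (X : nat -> nat -> int -> int).
Hypotheses (hn : (1 < n)%N) (hX : is_inv_qcartan n X).

(* The part of X which the theorem asserts to vanish. *)
Definition wrong_parity_part j c (r : int) : int :=
  if (2 %| r)%Z == (c == n) then X j c r else 0.

Lemma CX_coef_wrong_parity_long j c (r : int) : (1 <= j < n)%N -> (1 <= c <= n)%N ->
  CX_coef n wrong_parity_part j c r = 0.
Proof.
move=> hj hc; have [_ hCX] := hX; have [s2m s2p _] := dvdz2_shift r.
rewrite CX_coef_long_row // /wrong_parity_part s2m s2p.
case: eqP => hp /=; last by case: ifP.
rewrite -(CX_coef_long_row n X) ?hCX //; last by lia.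
by case: (r =P 0) hp => [->|]; rewrite ?andbF //; lia.
Qed.

Lemma CX_coef_wrong_parity_short c (r : int) : (1 <= c <= n)%N ->
  CX_coef n wrong_parity_part n c r = 0.
Proof.
move=> hc; have [_ hCX] := hX; have [_ _ s1] := dvdz2_shift r.
rewrite CX_coef_short_row // /wrong_parity_part s1; case: eqP => hp /=; last by [].
rewrite -(CX_coef_short_row n X) ?hCX //; last by lia.
by case: (r =P 0) hp => [->|]; rewrite ?andbF //; lia.
Qed.

Lemma inv_qcartan_parity j c r : (1 <= j <= n)%N -> (1 <= c <= n)%N ->
  (2 %| r)%Z = (c == n) -> X j c r = 0.
Proof.
move=> hj hc hpar; have [[N hN] _] := hX.
have top j' (r' : int) : (1 <= j' <= n)%N -> N < r' -> wrong_parity_part j' c r' = 0.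
  by move=> hj' hr'; rewrite /wrong_parity_part hN ?if_same.
have homog j' (r' : int) : (1 <= j' <= n)%N -> r + 1 <= r' ->
    CX_coef n wrong_parity_part j' c r' = 0.
  move=> hj' _; case: (ltnP j' n) => hj'n.
    by apply: CX_coef_wrong_parity_long; lia.
  by rewrite (_ : j' = n); [apply: CX_coef_wrong_parity_short | lia].
have := @CX_coef_homog_eq0 n wrong_parity_part c (r + 1) N hn homog top j r hj.
by rewrite /wrong_parity_part hpar eqxx; apply; lia.
Qed.
End Parity.

(** * Identification with the candidate *)

(* Stated in [Z_scope] so that the right-hand sides are literally the Stdlib terms
   occurring in the lemmas on [ctildeZ]. *)
Section IntToZ.
Local Open Scope Z_scope.

Lemma Z_of_int_subr2 (r : int) : Z_of_int (r - 2)%R = Z_of_int r - 2.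
Proof. lia. Qed.

Lemma Z_of_int_addr2 (r : int) : Z_of_int (r + 2)%R = Z_of_int r + 2.
Proof. lia. Qed.

Lemma Z_of_int_subr1 (r : int) : Z_of_int (r - 1)%R = Z_of_int r - 1.
Proof. lia. Qed.

Lemma Z_of_int_addr1 (r : int) : Z_of_int (r + 1)%R = Z_of_int r + 1.
Proof. lia. Qed.

Lemma Z_of_nat_pred (j : nat) : (0 < j)%N -> Z.of_nat j.-1 = Z.of_nat j - 1.
Proof. lia. Qed.

Lemma Z_of_nat_succ (j : nat) : Z.of_nat j.+1 = Z.of_nat j + 1.
Proof. lia. Qed.

Lemma Z_of_int_even (k : nat) : Z_of_int (- (2 * k%:Z))%R = - (2 * Z.of_nat k).
Proof. lia. Qed.

Lemma Z_of_int_odd (k : nat) : Z_of_int (- (2 * k%:Z) - 1)%R = - (2 * Z.of_nat k) - 1.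
Proof. lia. Qed.

Lemma Z_of_int_even_mirror (n k : nat) :
  Z_of_int (- (4 * n%:Z) + 2 + 2 * k%:Z)%R = - (2 * (2 * Z.of_nat n - 1 - Z.of_nat k)).
Proof. lia. Qed.

Lemma Z_of_int_odd_mirror (n k : nat) :
  Z_of_int (- (4 * n%:Z) + 3 + 2 * k%:Z)%R = - (2 * (2 * Z.of_nat n - 2 - Z.of_nat k)) - 1.
Proof. lia. Qed.

Lemma dvdz2_even (x : int) : (2 %| x)%Z = Z.even (Z_of_int x).
Proof.
apply/idP/idP => [/dvdzP [q ->] | /Z.even_spec [m hm]].
  by rewrite (_ : Z_of_int (q * 2)%R = 2 * Z_of_int q) ?Z.even_mul //; lia.
by apply/dvdzP; exists (int_of_Z m); lia.
Qed.

Lemma in2N_Z (x : int) : in2N x = in2NZ (Z_of_int x).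
Proof. by rewrite /in2N /in2NZ dvdz2_even; congr andb; apply/idP/idP; lia. Qed.

Lemma starB_Z (n i j k : nat) :
  starB n i j k = starZ (Z.of_nat n) (Z.of_nat i) (Z.of_nat j) (Z.of_nat k).
Proof.
rewrite /starB /starZ /in2N !dvdz2_even.
rewrite (_ : Z_of_int _ = Z.of_nat k + Z.of_nat j - Z.of_nat i - 1); last lia.
rewrite (_ : Z_of_int _ = Z.of_nat k + Z.of_nat j - Z.of_nat i - 1
                          + 2 * (Z.of_nat i - Z.of_nat j)); last lia.
rewrite Z.even_add_mul_2; case: (Z.even _); rewrite ?andbT ?andbF; apply/idP/idP; lia.
Qed.

End IntToZ.

Lemma CX_coefB n (Y1 Y2 : nat -> nat -> int -> int) i k r :
  CX_coef n (fun j c s => Y1 j c s - Y2 j c s) i k r = CX_coef n Y1 i k r - CX_coef n Y2 i k r.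
Proof.
rewrite /CX_coef -sumrB; apply: eq_bigr => j _.
by rewrite -sumrB; apply: eq_bigr => t _; rewrite mulrBr.
Qed.

Definition ctilde (n j c : nat) (r : int) : int :=
  int_of_Z (ctildeZ (Z.of_nat n) (Z.of_nat j) (Z.of_nat c) (Z_of_int r)).

Section Candidate.
Variable n : nat.
Hypothesis hn : (1 < n)%N.

Lemma CX_coef_ctilde_long j c (r : int) : (1 <= j < n)%N -> (1 <= c <= n)%N ->
  - (4 * n%:Z) + 3 <= r -> CX_coef n (ctilde n) j c r = ((j == c) && (r == 0) : int).
Proof.
move=> hj hc hr; rewrite CX_coef_long_row //.
have -> : (if (1 < j)%N then ctilde n j.-1 c r else 0) = ctilde n j.-1 c r.
  by case: ifP => // hj1; rewrite /ctilde (_ : j.-1 = 0%N) ?ctildeZ_j0; last lia.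
rewrite /ctilde Z_of_int_subr2 Z_of_int_addr2 Z_of_nat_succ Z_of_nat_pred; last lia.
have := ctildeZ_rec (Z.of_nat n) (Z.of_nat j) (Z.of_nat c) (Z_of_int r).
lia.
Qed.

Lemma CX_coef_ctilde_short c (r : int) : (1 <= c <= n)%N -> - (4 * n%:Z) + 3 <= r ->
  CX_coef n (ctilde n) n c r = ((n == c) && (r == 0) : int).
Proof.
move=> hc hr; rewrite CX_coef_short_row // /ctilde Z_of_int_subr1 Z_of_int_addr1.
rewrite Z_of_nat_pred; last lia.
have := ctildeZ_rec_n (Z.of_nat n) (Z.of_nat c) (Z_of_int r).
lia.
Qed.

Lemma ctilde_pos j c r : 0 < r -> ctilde n j c r = 0.
Proof. by move=> hr; rewrite /ctilde ctildeZ_pos //; lia. Qed.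

End Candidate.

Section Identification.
Variables (n : nat) (X : nat -> nat -> int -> int).
Hypotheses (hn : (1 < n)%N) (hX : is_inv_qcartan n X).

Lemma inv_qcartan_window j c (r : int) : (1 <= j <= n)%N -> (1 <= c <= n)%N ->
  - (4 * n%:Z) + 2 <= r -> X j c r = ctilde n j c r.
Proof.
move=> hj hc hr; have [[N hN] hCX] := hX.
pose D j' c' r' := X j' c' r' - ctilde n j' c' r'.
have top j' (r' : int) : (1 <= j' <= n)%N -> Num.max N 0 < r' -> D j' c r' = 0.
  by move=> hj' hr'; rewrite /D hN ?ctilde_pos ?subr0 //; lia.
have homog j' (r' : int) : (1 <= j' <= n)%N -> - (4 * n%:Z) + 3 <= r' ->
    CX_coef n D j' c r' = 0.
  move=> hj' hr'; rewrite /D CX_coefB hCX //; case: (ltnP j' n) => hj'n.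
    by rewrite CX_coef_ctilde_long ?subrr //; lia.
  by rewrite (_ : j' = n) ?CX_coef_ctilde_short ?subrr //; lia.
apply/eqP; rewrite -subr_eq0; apply/eqP.
by apply: (@CX_coef_homog_eq0 n D c _ _ hn homog top j r hj); lia.
Qed.

Lemma int_of_Z_b2z (b : bool) : int_of_Z (Z.b2z b) = (if b then 1 else 0).
Proof. by case: b. Qed.

Lemma inv_qcartan_long j i k : (1 <= j <= n)%N -> (1 <= i < n)%N -> (k < n)%N ->
  X j i (- (2 * k%:Z)) = (if starB n i j k then 1 else 0) /\
  X j i (- (4 * n%:Z) + 2 + 2 * k%:Z) = (if starB n i j k then 1 else 0).
Proof.
move=> hj hi hk; rewrite !inv_qcartan_window; try lia.
rewrite /ctilde Z_of_int_even Z_of_int_even_mirror starB_Z -!int_of_Z_b2z.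
by have [-> ->] := ctildeZ_long (Z.of_nat n) (Z.of_nat j) (Z.of_nat i) (Z.of_nat k)
  ltac:(lia) ltac:(lia) ltac:(lia).
Qed.

Lemma inv_qcartan_short j k : (1 <= j <= n)%N -> (k < n)%N ->
  X j n (- (2 * k%:Z) - 1) = (if in2N (k%:Z + j%:Z - n%:Z) then 1 else 0) /\
  X j n (- (4 * n%:Z) + 3 + 2 * k%:Z) = (if in2N (k%:Z + j%:Z - n%:Z) then 1 else 0).
Proof.
move=> hj hk; rewrite !inv_qcartan_window; try lia.
rewrite /ctilde Z_of_int_odd Z_of_int_odd_mirror in2N_Z -!int_of_Z_b2z.
rewrite (_ : Z_of_int _ = (Z.of_nat k + Z.of_nat j - Z.of_nat n)%Z); last lia.
by have [-> ->] := ctildeZ_short (Z.of_nat n) (Z.of_nat j) (Z.of_nat k) ltac:(lia) ltac:(lia).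
Qed.

End Identification.

Theorem lemmaA1 (n : nat) (hn : (2 <= n)%N) (X : nat -> nat -> int -> int)
    (hX : is_inv_qcartan n X) :
  (forall (j k : nat), (1 <= j <= n)%N ->
     (forall i : nat, (1 <= i <= n.-1)%N -> X j i (- (2 * k%:Z) - 1) = 0) /\
     X j n (- (2 * k%:Z) - 2) = 0) /\
  (forall (j k : nat), (1 <= j <= n)%N -> (k <= n.-1)%N ->
     (forall i : nat, (1 <= i <= n.-1)%N ->
        X j i (- (2 * k%:Z)) = (if starB n i j k then 1 else 0)) /\
     X j n (- (2 * k%:Z) - 1) =
        (if in2N (k%:Z + j%:Z - n%:Z) then 1 else 0)) /\
  (forall (j k : nat), (1 <= j <= n)%N -> (k <= n.-1)%N ->
     (forall i : nat, (1 <= i <= n.-1)%N ->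
        X j i (- (2 * k%:Z)) = X j i (- (4 * n%:Z) + 2 + 2 * k%:Z)) /\
     X j n (- (2 * k%:Z) - 1) = X j n (- (4 * n%:Z) + 3 + 2 * k%:Z)).
Proof.
have hpar := inv_qcartan_parity n X hn hX.
have hlong := inv_qcartan_long n X hn hX.
have hshort := inv_qcartan_short n X hn hX.
split; [|split].
- move=> j k hj; split=> [i hi|]; apply: hpar => //; try lia; apply/idP/idP; lia.
- move=> j k hj hk; split=> [i hi|].
  + by have [-> _] := hlong j i k hj ltac:(lia) ltac:(lia).
  + by have [-> _] := hshort j k hj ltac:(lia).
- move=> j k hj hk; split=> [i hi|].
  + by have [-> ->] := hlong j i k hj ltac:(lia) ltac:(lia).
  + by have [-> ->] := hshort j k hj ltac:(lia).
Qed.
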